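(* Let $k\in\mathbb{N}$ and let $M_\psi$ be a bounded multiplication operator on $\mathcal{L}^{(k)}$. The following are equivalent: (a) $M_\psi$ is compact on $\mathcal{L}^{(k)}$; (b) $M_\psi$ is compact on $\mathcal{L}^{(k)}_0$; (c) $\psi\in L_0\cap\mathcal{L}^{(k+1)}_0$.
   Context: $T$ is a tree (locally finite, connected, simply connected graph, identified with its vertex set) without terminal vertices, rooted at $o$. $|v|$ is the distance from $o$ to $v$; for $v\ne o$, $v^-$ is the parent of $v$. $T^*=T\setminus\{o\}$, $Df(v)=|f(v)-f(v^-)|$. For $x\ge1$: $\ell_0(x)=1$, $\ell_1(x)=1+\ln x$, $\ell_j(x)=1+\ln\ell_{j-1}(x)$ for $j\ge2$. For $m\in\mathbb{N}$, $\mathcal{L}^{(m)}$ is the space of $f:T\to\mathbb{C}$ with $\sup_{v\in T^*}|v|\prod_{j=0}^{m-1}\ell_j(|v|)Df(v)<\infty$, normed by $\|f\|_m=|f(o)|+\sup_{v\in T^*}|v|\prod_{j=0}^{m-1}\ell_j(|v|)Df(v)$; $\mathcal{L}^{(m)}_0$ is its subspace of $f$ with $\lim_{|v|\to\infty}|v|\prod_{j=0}^{m-1}\ell_j(|v|)Df(v)=0$. $L_0$ is the set of functions $f$ on $T$ with $\lim_{|v|\to\infty}f(v)=0$. $M_\psi f=\psi f$. *)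

From Stdlib Require Import Reals Lra.
From Coquelicot Require Import Coquelicot.
Open Scope R_scope.

(* A rooted tree T, encoded by its root o, its parent map v |-> v^- and the
   distance |v| to the root.  The graph has edges {v, v^-} for v <> o; the
   depth axioms make it connected and simply connected (every vertex reaches
   o by iterating the parent map, depth decreasing by one at each step). *)
Record rtree := {
  vert :> Type;
  root : vert;
  par : vert -> vert;                 (* v^-, meaningful for v <> root *)
  depth : vert -> nat;
  depth_root : depth root = 0%nat;
  depth_eq0 : forall v, depth v = 0%nat -> v = root;
  depth_par : forall v, v <> root -> depth v = S (depth (par v));
  loc_finite : forall v, exists s : list vert,
      forall w, w <> root -> par w = v -> List.In w s;
  (* no terminal vertices (vertices of degree 1):
     a non-root vertex has a neighbour besides its parent, i.e. a child ... *)
  no_term : forall v, v <> root -> exists w, w <> root /\ par w = v;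
  (* ... and the root does not have exactly one neighbour *)
  no_term_root :
    (forall w, w <> root -> par w <> root) \/
    (exists w1 w2, w1 <> root /\ w2 <> root /\ w1 <> w2 /\
                   par w1 = root /\ par w2 = root)
}.

Fixpoint ell (j : nat) (x : R) : R :=
  match j with
  | O => 1
  | S O => 1 + ln x
  | S j' => 1 + ln (ell j' x)
  end.

Fixpoint ellprod (m : nat) (x : R) : R :=
  match m with
  | O => 1
  | S m' => ellprod m' x * ell m' x
  end.

Definition wt (m : nat) (n : nat) : R := INR n * ellprod m (INR n).

Definition Dif (T : rtree) (f : T -> C) (v : T) : R := Cmod (f v - f (par T v))%C.

Definition wD (T : rtree) (m : nat) (f : T -> C) (v : T) : R :=
  wt m (depth T v) * Dif T f v.

Definition inL (T : rtree) (m : nat) (f : T -> C) : Prop :=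
  exists B, forall v : T, v <> root T -> wD T m f v <= B.

Definition inL0 (T : rtree) (m : nat) (f : T -> C) : Prop :=
  inL T m f /\
  forall eps, 0 < eps -> exists N, forall v : T, v <> root T ->
    (N <= depth T v)%nat -> wD T m f v <= eps.

Definition inLzero (T : rtree) (f : T -> C) : Prop :=
  forall eps, 0 < eps -> exists N, forall v : T, (N <= depth T v)%nat ->
    Cmod (f v) <= eps.

Definition normL (T : rtree) (m : nat) (f : T -> C) : R :=
  Cmod (f (root T)) +
  real (Lub_Rbar (fun x => exists v : T, v <> root T /\ x = wD T m f v)).

Definition Mult (T : rtree) (psi : T -> C) (f : T -> C) : T -> C :=
  fun v => (psi v * f v)%C.

Definition bounded_on (T : rtree) (m : nat) (X : (T -> C) -> Prop)
  (A : (T -> C) -> (T -> C)) : Prop :=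
  (forall f, X f -> X (A f)) /\
  exists K, 0 <= K /\ forall f, X f -> normL T m (A f) <= K * normL T m f.

Definition compact_on (T : rtree) (m : nat) (X : (T -> C) -> Prop)
  (A : (T -> C) -> (T -> C)) : Prop :=
  (forall f, X f -> X (A f)) /\
  forall (f : nat -> T -> C),
    (forall n, X (f n)) ->
    (exists B, forall n, normL T m (f n) <= B) ->
    exists (phi : nat -> nat) (g : T -> C),
      (forall n, (phi n < phi (S n))%nat) /\ X g /\
      is_lim_seq (fun n => normL T m (fun v => (A (f (phi n)) v - g v)%C)) 0.

From Stdlib Require Rtopology.
From Stdlib Require Import Reals Lra Lia FunctionalExtensionality Classical IndefiniteDescription.
From Coquelicot Require Import Coquelicot.
Open Scope R_scope.

(* For [psi] in [L_0] and [L_0^(k+1)], the product rule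

     wD_k (psi h) v <= b |psi v| + (a + b) wD_(k+1) psi v
       whenever |h o| <= a and wD_k h <= b

   makes [M_psi h] small beyond a large depth, uniformly on bounded sets.  Balls of
   the tree are finite, so a bounded sequence has a pointwise convergent subsequence
   (diagonal argument), along which the images converge in norm.
   Conversely, let [S(n) = sum_(1 <= j <= n) 1 / (j ell_0(j) ... ell_(k-1)(j))], which
   grows like [ell_k(n)].  The test functions [f_N = S(min(|v|, N))^2 / S(N)] are
   bounded and tend to 0 pointwise, so compactness forces [M_psi f_N] to tend to 0
   in norm along a subsequence.  Since [f_N = S(N)] beyond depth [N], this gives
   [psi -> 0] at infinity, and [S(N) ~ ell_k(N)] turns the difference quotients of
   [M_psi f_N] into those of [psi] with the extra weight [ell_k]. *)

(** * Iterated logarithms and weights *)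

Lemma ln_ge0 x : 1 <= x -> 0 <= ln x.
Proof. intros Hx. rewrite <- ln_1. apply ln_le; lra. Qed.

Lemma ln_sub_le a b : 0 < a -> 0 < b -> ln b - ln a <= (b - a) / a.
Proof.
  intros Ha Hb. rewrite <- ln_div by lra.
  pose proof (exp_ineq1_le (ln (b / a))) as H.
  rewrite exp_ln in H by (apply Rdiv_lt_0_compat; lra).
  replace ((b - a) / a) with (b / a - 1) by (field; lra). lra.
Qed.

Lemma ln_sub_ge a b : 0 < a -> 0 < b -> (b - a) / b <= ln b - ln a.
Proof.
  intros Ha Hb. pose proof (ln_sub_le b a Hb Ha) as H.
  replace ((a - b) / b) with (- ((b - a) / b)) in H by (field; lra). lra.
Qed.

Lemma ell_SS i x : ell (S (S i)) x = 1 + ln (ell (S i) x).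
Proof. reflexivity. Qed.

Lemma ell_ge1 j x : 1 <= x -> 1 <= ell j x.
Proof.
  intros Hx. destruct j as [|j]; [simpl; lra|].
  induction j as [|j IH]; [simpl; pose proof (ln_ge0 x Hx); lra|].
  rewrite ell_SS. pose proof (ln_ge0 _ IH). lra.
Qed.

Lemma ell_le j x y : 1 <= x -> x <= y -> ell j x <= ell j y.
Proof.
  intros Hx Hxy. destruct j as [|j]; [simpl; lra|].
  induction j as [|j IH]; [simpl; pose proof (ln_le x y ltac:(lra) Hxy); lra|].
  rewrite !ell_SS. pose proof (ell_ge1 (S j) x Hx).
  pose proof (ln_le (ell (S j) x) (ell (S j) y) ltac:(lra) IH). lra.
Qed.

Lemma ell_1 j : ell j 1 = 1.
Proof.
  destruct j as [|j]; [reflexivity|].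
  induction j as [|j IH]; [simpl; rewrite ln_1; lra|].
  rewrite ell_SS, IH, ln_1. lra.
Qed.

Lemma ell_S_unbounded i M : exists N, forall n, (N <= n)%nat -> M <= ell (S i) (INR n).
Proof.
  revert M. induction i as [|i IH]; intros M.
  - destruct (INR_unbounded (exp M)) as [N HN]. exists N. intros n Hn.
    pose proof (le_INR _ _ Hn). pose proof (exp_pos M).
    pose proof (ln_le (exp M) (INR n) ltac:(lra) ltac:(lra)) as HL.
    rewrite ln_exp in HL. simpl. lra.
  - destruct (IH (exp M)) as [N HN]. exists N. intros n Hn.
    rewrite ell_SS. pose proof (exp_pos M).
    pose proof (ln_le (exp M) _ ltac:(lra) (HN n Hn)) as HL.
    rewrite ln_exp in HL. lra.
Qed.

Lemma ellprod_ge1 m x : 1 <= x -> 1 <= ellprod m x.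
Proof.
  intros Hx. induction m as [|m IH]; simpl; [lra|].
  pose proof (ell_ge1 m x Hx). nra.
Qed.

Lemma ellprod_le m x y : 1 <= x -> x <= y -> ellprod m x <= ellprod m y.
Proof.
  intros Hx Hxy. induction m as [|m IH]; simpl; [lra|].
  pose proof (ell_ge1 m x Hx). pose proof (ellprod_ge1 m x Hx).
  pose proof (ell_le m x y Hx Hxy). apply Rmult_le_compat; lra.
Qed.

Lemma ellprod_1 m : ellprod m 1 = 1.
Proof. induction m as [|m IH]; simpl; [reflexivity|]. rewrite IH, ell_1. lra. Qed.

Lemma INR_ge1 n : (1 <= n)%nat -> 1 <= INR n.
Proof. intros Hn. apply (le_INR 1 n) in Hn. simpl in Hn. lra. Qed.

Lemma wt_ge1 m n : (1 <= n)%nat -> 1 <= wt m n.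
Proof.
  intros Hn. unfold wt. pose proof (INR_ge1 n Hn) as Hx.
  pose proof (ellprod_ge1 m _ Hx). nra.
Qed.

Lemma wt_le m n p : (1 <= n)%nat -> (n <= p)%nat -> wt m n <= wt m p.
Proof.
  intros Hn Hnp. unfold wt. pose proof (INR_ge1 n Hn) as Hx.
  pose proof (le_INR _ _ Hnp) as Hxy.
  pose proof (ellprod_ge1 m _ Hx). pose proof (ellprod_le m _ _ Hx Hxy).
  apply Rmult_le_compat; lra.
Qed.

Lemma wt_S m n : wt (S m) n = wt m n * ell m (INR n).
Proof. unfold wt. simpl. ring. Qed.

Lemma wt_1 m : wt m 1 = 1.
Proof. unfold wt. simpl INR. rewrite ellprod_1. ring. Qed.

(* The discrete form of ell_{i+1}'(x) = 1 / (x ell_0(x) ... ell_i(x)). *)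
Lemma ell_S_sub_ge i n : (1 <= n)%nat ->
  / wt (S i) (S n) <= ell (S i) (INR (S n)) - ell (S i) (INR n).
Proof.
  intros Hn. pose proof (INR_ge1 n Hn) as Hx. rewrite S_INR.
  induction i as [|i IH].
  - unfold wt. simpl ellprod. rewrite S_INR. simpl ell.
    pose proof (ln_sub_ge (INR n) (INR n + 1) ltac:(lra) ltac:(lra)).
    replace (/ ((INR n + 1) * (1 * 1))) with ((INR n + 1 - INR n) / (INR n + 1))
      by (field; lra). lra.
  - rewrite !ell_SS, wt_S, S_INR.
    pose proof (ell_ge1 (S i) (INR n) ltac:(lra)).
    pose proof (ell_ge1 (S i) (INR n + 1) ltac:(lra)).
    pose proof (wt_ge1 (S i) (S n) ltac:(lia)).
    pose proof (ln_sub_ge (ell (S i) (INR n)) (ell (S i) (INR n + 1)) ltac:(lra) ltac:(lra)).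
    set (a := ell (S i) (INR n)) in *. set (b := ell (S i) (INR n + 1)) in *.
    set (w := wt (S i) (S n)) in *.
    replace (/ (w * b)) with (/ w / b) by (field; lra).
    enough (/ w / b <= (b - a) / b) by lra.
    unfold Rdiv. apply Rmult_le_compat_r; [apply Rlt_le, Rinv_0_lt_compat|]; lra.
Qed.

Lemma ell_S_sub_le i : exists C, 1 <= C /\ forall n, (1 <= n)%nat ->
  ell (S i) (INR (S n)) - ell (S i) (INR n) <= C / wt (S i) (S n).
Proof.
  induction i as [|i [C [HC IH]]].
  - exists 2. split; [lra|]. intros n Hn. pose proof (INR_ge1 n Hn).
    unfold wt. simpl ellprod. rewrite !S_INR. simpl ell.
    pose proof (ln_sub_le (INR n) (INR n + 1) ltac:(lra) ltac:(lra)).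
    enough ((INR n + 1 - INR n) / INR n <= 2 / ((INR n + 1) * (1 * 1))) by lra.
    apply Rmult_le_reg_l with (INR n * (INR n + 1)); [nra|].
    field_simplify; lra.
  - exists (C * (1 + C)). split; [nra|]. intros n Hn.
    pose proof (INR_ge1 n Hn). specialize (IH n Hn).
    rewrite !ell_SS, wt_S.
    pose proof (ell_ge1 (S i) (INR n) ltac:(lra)).
    pose proof (ell_ge1 (S i) (INR (S n)) ltac:(rewrite S_INR; lra)).
    pose proof (wt_ge1 (S i) (S n) ltac:(lia)).
    pose proof (ln_sub_le (ell (S i) (INR n)) (ell (S i) (INR (S n))) ltac:(lra) ltac:(lra)).
    set (a := ell (S i) (INR n)) in *. set (b := ell (S i) (INR (S n))) in *.
    set (w := wt (S i) (S n)) in *.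
    assert (HCw : C / w <= C) by (apply Rmult_le_reg_l with w; [lra|]; field_simplify; nra).
    assert (Hwd : w * (b - a) <= C) by (rewrite Rmult_comm; apply Rle_div_r; lra).
    assert (Hb : b <= a * (1 + C)) by nra.
    enough ((b - a) / a <= C * (1 + C) / (w * b)) by lra.
    apply Rmult_le_reg_l with (w * a * b); [apply Rmult_lt_0_compat; nra|].
    field_simplify; [|lra|lra].
    pose proof (Rmult_le_compat_l b _ _ ltac:(lra) Hwd).
    pose proof (Rmult_le_compat_l C _ _ ltac:(lra) Hb). nra.
Qed.

(* The largest possible value of [|f v - f o|] at depth [n] when [wD m f <= 1]. *)
Fixpoint wsum (m n : nat) : R :=
  match n with O => 0 | S n' => wsum m n' + / wt m (S n') end.

Lemma inv_wt_pos m n : 0 < / wt m (S n).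
Proof. apply Rinv_0_lt_compat. pose proof (wt_ge1 m (S n) ltac:(lia)). lra. Qed.

Lemma inv_wt_le1 m n : / wt m (S n) <= 1.
Proof.
  pose proof (wt_ge1 m (S n) ltac:(lia)).
  rewrite <- Rinv_1. apply Rinv_le_contravar; lra.
Qed.

Lemma wsum_ge0 m n : 0 <= wsum m n.
Proof. induction n; simpl; [lra|]. pose proof (inv_wt_pos m n). lra. Qed.

Lemma wsum_le m n p : (n <= p)%nat -> wsum m n <= wsum m p.
Proof. induction 1 as [|p _ IH]; simpl; [lra|]. pose proof (inv_wt_pos m p). lra. Qed.

Lemma wsum_gt0 m n : (1 <= n)%nat -> 0 < wsum m n.
Proof.
  intros Hn. destruct n as [|n]; [lia|]. simpl.
  pose proof (wsum_ge0 m n). pose proof (inv_wt_pos m n). lra.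
Qed.

Lemma wsum_le_ell i n : wsum (S i) n <= ell (S i) (INR (S n)).
Proof.
  assert (Hle : forall p, (1 <= p)%nat -> wsum (S i) p <= ell (S i) (INR p)).
  { induction 1 as [|p Hp IH]; simpl wsum.
    - change (INR 1) with 1. rewrite wt_1, ell_1. lra.
    - pose proof (ell_S_sub_ge i p Hp). lra. }
  destruct n as [|n].
  - simpl wsum. change (INR 1) with 1. rewrite ell_1. lra.
  - pose proof (Hle (S n) ltac:(lia)).
    pose proof (ell_le (S i) (INR (S n)) (INR (S (S n)))
                  (INR_ge1 (S n) ltac:(lia)) (le_INR (S n) (S (S n)) ltac:(lia))). lra.
Qed.

Lemma ell_le_wsum i : exists C, 1 <= C /\
  forall n, (1 <= n)%nat -> ell (S i) (INR n) - 1 <= C * wsum (S i) n.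
Proof.
  destruct (ell_S_sub_le i) as [C [HC Hsub]]. exists C. split; [exact HC|].
  induction 1 as [|n Hn IH]; simpl wsum.
  - change (INR 1) with 1. rewrite wt_1, ell_1. lra.
  - specialize (Hsub n Hn). unfold Rdiv in Hsub. lra.
Qed.

Lemma wsum_unbounded i : is_lim_seq (wsum (S i)) p_infty.
Proof.
  apply is_lim_seq_spec. intros M.
  destruct (ell_le_wsum i) as [C [HC Hle]].
  destruct (ell_S_unbounded i (C * Rabs M + C + 1)) as [N HN].
  exists (S N). intros n Hn. specialize (HN n ltac:(lia)). specialize (Hle n ltac:(lia)).
  pose proof (Rle_abs M). pose proof (Rabs_pos M).
  apply Rmult_lt_reg_l with C; nra.
Qed.

Lemma wsum_ge_ell i : exists c, 0 < c /\
  eventually (fun n => c * ell (S i) (INR (S n)) <= wsum (S i) n).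
Proof.
  destruct (ell_le_wsum i) as [C [HC Hle]].
  exists (/ (2 * C)). split; [apply Rinv_0_lt_compat; lra|].
  destruct (ell_S_unbounded i (2 * (C + 1))) as [N HN].
  exists N. intros n Hn. specialize (HN (S n) ltac:(lia)).
  specialize (Hle (S n) ltac:(lia)). simpl wsum in Hle.
  pose proof (inv_wt_le1 (S i) n).
  apply Rmult_le_reg_l with (2 * C); [lra|].
  rewrite <- Rmult_assoc, Rinv_r, Rmult_1_l by lra. nra.
Qed.

(** * Subsequences of complex sequences *)

Definition strictly_increasing (phi : nat -> nat) : Prop :=
  forall n, (phi n < phi (S n))%nat.

Lemma strictly_increasing_lt phi : strictly_increasing phi ->
  forall m n, (m < n)%nat -> (phi m < phi n)%nat.
Proof.
  intros Hphi m n Hmn. induction Hmn as [|n _ IH]; [apply Hphi|]. specialize (Hphi n). lia.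
Qed.

Lemma strictly_increasing_le phi : strictly_increasing phi ->
  forall m n, (m <= n)%nat -> (phi m <= phi n)%nat.
Proof.
  intros Hphi m n Hmn. apply Nat.lt_eq_cases in Hmn as [Hlt| ->]; [|lia].
  apply Nat.lt_le_incl, strictly_increasing_lt; assumption.
Qed.

Lemma strictly_increasing_ge phi : strictly_increasing phi -> forall n, (n <= phi n)%nat.
Proof. intros Hphi n. induction n; [lia|]. specialize (Hphi n). lia. Qed.

Lemma strictly_increasing_comp phi psi : strictly_increasing phi -> strictly_increasing psi ->
  strictly_increasing (fun n => phi (psi n)).
Proof. intros Hphi Hpsi n. apply strictly_increasing_lt; auto. Qed.

Lemma eventually_forall_In {A : Type} (l : list A) (P : A -> nat -> Prop) :
  (forall a, List.In a l -> eventually (P a)) ->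
  eventually (fun n => forall a, List.In a l -> P a n).
Proof.
  induction l as [|a l IH]; intros H.
  - exists O. intros n _ b [].
  - apply (filter_imp (fun n => P a n /\ forall b, List.In b l -> P b n)).
    + intros n [Ha Hl] b [<-|Hb]; auto.
    + apply filter_and; [apply H; left; reflexivity|].
      apply IH. intros b Hb. apply H. right. exact Hb.
Qed.

Lemma Cminus_0_r (z : C) : (z - 0)%C = z.
Proof. ring. Qed.

Lemma Cmod_sub_le (z w : C) : Cmod (z - w) <= Cmod z + Cmod w.
Proof.
  pose proof (Cmod_triangle z (- w)) as H. rewrite Cmod_opp in H. exact H.
Qed.

Lemma Cmod_le_abs_fst_snd (z : C) : Cmod z <= Rabs (fst z) + Rabs (snd z).
Proof.
  destruct z as [a b]. unfold Cmod. simpl fst. simpl snd.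
  pose proof (Rabs_pos a). pose proof (Rabs_pos b).
  rewrite <- (sqrt_pow2 (Rabs a + Rabs b)) by lra. apply sqrt_le_1_alt.
  rewrite <- (pow2_abs a), <- (pow2_abs b). nra.
Qed.

Definition cv_C (u : nat -> C) (l : C) : Prop :=
  forall eps, 0 < eps -> eventually (fun n => Cmod (u n - l) <= eps).

Lemma cv_C_subseq (u v : nat -> C) l :
  eventually (fun n => exists n', (n <= n')%nat /\ v n = u n') -> cv_C u l -> cv_C v l.
Proof.
  intros [j Hj] Hu eps Heps. destruct (Hu eps Heps) as [N HN].
  exists (Nat.max N j). intros n Hn.
  destruct (Hj n ltac:(lia)) as [n' [Hn' ->]]. apply HN. lia.
Qed.

Lemma cv_C_sub u1 u2 l1 l2 : cv_C u1 l1 -> cv_C u2 l2 ->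
  cv_C (fun n => u1 n - u2 n)%C (l1 - l2)%C.
Proof.
  intros H1 H2 eps Heps.
  apply (filter_imp (fun n => Cmod (u1 n - l1) <= eps / 2 /\ Cmod (u2 n - l2) <= eps / 2)).
  - intros n [Hn1 Hn2].
    replace (u1 n - u2 n - (l1 - l2))%C with ((u1 n - l1) - (u2 n - l2))%C by ring.
    pose proof (Cmod_sub_le (u1 n - l1) (u2 n - l2)). lra.
  - apply filter_and; [apply H1|apply H2]; lra.
Qed.

Lemma cv_C_scal u l c : cv_C u l -> cv_C (fun n => c * u n)%C (c * l)%C.
Proof.
  intros Hu eps Heps. pose proof (Cmod_ge_0 c).
  apply (filter_imp (fun n => Cmod (u n - l) <= eps / (Cmod c + 1))).
  - intros n Hn. replace (c * u n - c * l)%C with (c * (u n - l))%C by ring.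
    rewrite Cmod_mult.
    apply Rle_trans with ((Cmod c + 1) * (eps / (Cmod c + 1))); [|right; field; lra].
    pose proof (Cmod_ge_0 (u n - l)). nra.
  - apply Hu. apply Rdiv_lt_0_compat; lra.
Qed.

Lemma cv_C_Cmod_le u l B : cv_C u l -> (forall n, Cmod (u n) <= B) -> Cmod l <= B.
Proof.
  intros Hu HB. apply Rnot_lt_le. intros Hlt.
  destruct (Hu ((Cmod l - B) / 2) ltac:(lra)) as [N HN]. specialize (HN N (le_n N)).
  pose proof (Cmod_sub_le (u N) (u N - l)) as Htri.
  replace (u N - (u N - l))%C with l in Htri by ring.
  specialize (HB N). lra.
Qed.

Lemma cv_C_unique u l1 l2 : cv_C u l1 -> cv_C u l2 -> l1 = l2.
Proof.
  intros H1 H2. pose proof (cv_C_sub _ _ _ _ H1 H2) as H.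
  assert (Hle : Cmod (l1 - l2) <= 0).
  { apply (cv_C_Cmod_le (fun n => u n - u n)%C); [exact H|].
    intros n. replace (u n - u n)%C with (RtoC 0) by ring. rewrite Cmod_0. lra. }
  apply Ceq_minus, Cmod_eq_0. pose proof (Cmod_ge_0 (l1 - l2)). lra.
Qed.

Lemma bounded_R_cv_subseq (u : nat -> R) M : (forall n, Rabs (u n) <= M) ->
  exists phi, strictly_increasing phi /\ exists l : R, is_lim_seq (fun n => u (phi n)) l.
Proof.
  intros HM.
  destruct (Rtopology.Bolzano_Weierstrass u (fun x => -M <= x <= M)
              (Rtopology.compact_P3 (-M) M)) as [l Hl].
  { intros n. specialize (HM n). apply Rabs_le_between in HM. exact HM. }
  assert (Hnear : forall p : nat * nat, exists q,
             (snd p <= q)%nat /\ Rabs (u q - l) < / INR (S (fst p))).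
  { intros [n N]. simpl.
    assert (Hpos : 0 < / INR (S n)) by (apply Rinv_0_lt_compat, lt_0_INR; lia).
    apply (Hl (fun y => Rabs (y - l) < / INR (S n)) N).
    exists (mkposreal _ Hpos). intros y Hy. exact Hy. }
  destruct (functional_choice _ Hnear) as [c Hc].
  set (phi := fix phi n := match n with O => c (O, O) | S n' => c (n, S (phi n')) end).
  assert (Hphi : forall n, Rabs (u (phi n) - l) < / INR (S n)).
  { intros [|n]; [exact (proj2 (Hc (O, O)))|exact (proj2 (Hc (S n, S (phi n))))]. }
  exists phi. split; [intros n; exact (proj1 (Hc (S n, S (phi n))))|].
  exists l. apply is_lim_seq_spec. intros eps.
  destruct (archimed_cor1 eps (cond_pos eps)) as [N [HN HN0]].
  exists N. intros n Hn. eapply Rlt_trans; [apply Hphi|].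
  eapply Rle_lt_trans; [|exact HN].
  apply Rinv_le_contravar; [apply lt_0_INR; exact HN0|apply le_INR; lia].
Qed.

Lemma bounded_C_cv_subseq (u : nat -> C) M : (forall n, Cmod (u n) <= M) ->
  exists phi, strictly_increasing phi /\ exists l, cv_C (fun n => u (phi n)) l.
Proof.
  intros HM.
  destruct (bounded_R_cv_subseq (fun n => fst (u n)) M) as [phi1 [Hphi1 [l1 Hl1]]].
  { intros n. eapply Rle_trans; [|apply (HM n)].
    eapply Rle_trans; [apply Rmax_l|apply Rmax_Cmod]. }
  destruct (bounded_R_cv_subseq (fun n => snd (u (phi1 n))) M) as [phi2 [Hphi2 [l2 Hl2]]].
  { intros n. eapply Rle_trans; [|apply (HM (phi1 n))].
    eapply Rle_trans; [apply Rmax_r|apply Rmax_Cmod]. }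
  exists (fun n => phi1 (phi2 n)). split; [apply strictly_increasing_comp; assumption|].
  exists (l1, l2). intros eps Heps.
  apply (is_lim_seq_subseq _ _ phi2 (eventually_subseq _ Hphi2)) in Hl1.
  apply is_lim_seq_spec in Hl1, Hl2.
  apply (filter_imp _ _ (fun n Hn => Rlt_le _ _ Hn)).
  apply (filter_imp (fun n => Rabs (fst (u (phi1 (phi2 n))) - l1) < eps / 2 /\
                              Rabs (snd (u (phi1 (phi2 n))) - l2) < eps / 2)).
  - intros n [H1 H2]. eapply Rle_lt_trans; [apply Cmod_le_abs_fst_snd|].
    simpl. unfold Rminus in *. lra.
  - apply filter_and; [apply (Hl1 (mkposreal (eps / 2) ltac:(lra)))
                      |apply (Hl2 (mkposreal (eps / 2) ltac:(lra)))].
Qed.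

Lemma bounded_list_cv_subseq {A : Type} (l : list A) (x : nat -> A -> C) :
  (forall a, exists M, forall n, Cmod (x n a) <= M) ->
  exists phi, strictly_increasing phi /\
    forall a, List.In a l -> exists y, cv_C (fun n => x (phi n) a) y.
Proof.
  intros Hb. induction l as [|a l [phi1 [Hphi1 IH]]].
  - exists (fun n => n). split; [intros n; lia|]. intros a [].
  - destruct (Hb a) as [M HM].
    destruct (bounded_C_cv_subseq (fun n => x (phi1 n) a) M (fun n => HM (phi1 n)))
      as [phi2 [Hphi2 [y Hy]]].
    exists (fun n => phi1 (phi2 n)). split; [apply strictly_increasing_comp; assumption|].
    intros b [<-|Hbl]; [exists y; exact Hy|].
    destruct (IH b Hbl) as [y' Hy']. exists y'.
    apply (cv_C_subseq (fun n => x (phi1 n) b)); [|exact Hy'].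
    exists O. intros n _. exists (phi2 n).
    split; [apply strictly_increasing_ge, Hphi2|reflexivity].
Qed.

(* [nested_subseq sel j] is the composite [sel_0 o sel_1 o ... o sel_j], where
   [sel_j] refines the subsequence built so far. *)
Fixpoint nested_subseq (sel : nat * (nat -> nat) -> nat -> nat) (j : nat) : nat -> nat :=
  match j with
  | O => sel (O, fun n => n)
  | S j' => fun n => nested_subseq sel j' (sel (j, nested_subseq sel j') n)
  end.

Lemma pointwise_cv_subseq {A : Type} (lv : nat -> list A) (x : nat -> A -> C) :
  (forall a, exists j, List.In a (lv j)) ->
  (forall a, exists M, forall n, Cmod (x n a) <= M) ->
  exists phi, strictly_increasing phi /\
    exists f, forall a, cv_C (fun n => x (phi n) a) (f a).
Proof.
  intros Hcov Hb.
  assert (Hstep : forall p : nat * (nat -> nat), exists tau, strictly_increasing tau /\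
            forall a, List.In a (lv (fst p)) ->
              exists y, cv_C (fun n => x (snd p (tau n)) a) y).
  { intros [j sigma]. apply (bounded_list_cv_subseq (lv j) (fun n a => x (sigma n) a)).
    intros a. destruct (Hb a) as [M HM]. exists M. intros n. apply HM. }
  destruct (functional_choice _ Hstep) as [sel Hsel].
  set (Phi := nested_subseq sel).
  assert (Hinc : forall j, strictly_increasing (Phi j)).
  { induction j as [|j IH]; [apply (proj1 (Hsel (O, fun n => n)))|].
    change (strictly_increasing (fun n => Phi j (sel (S j, Phi j) n))).
    apply strictly_increasing_comp; [exact IH|apply (proj1 (Hsel (S j, Phi j)))]. }
  assert (Hconv : forall j a, List.In a (lv j) -> exists y, cv_C (fun n => x (Phi j n) a) y).
  { intros [|j] a Ha; [apply (proj2 (Hsel (O, fun n => n)))|apply (proj2 (Hsel (S j, Phi j)))];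
      exact Ha. }
  assert (Hnested : forall j m, (j <= m)%nat ->
            forall n, exists n', (n <= n')%nat /\ Phi m n = Phi j n').
  { intros j m Hjm. induction Hjm as [|m Hjm IH]; intros n; [exists n; auto|].
    destruct (IH (sel (S m, Phi m) n)) as [n' [Hn' E]]. exists n'. split; [|exact E].
    pose proof (strictly_increasing_ge _ (proj1 (Hsel (S m, Phi m))) n). lia. }
  exists (fun n => Phi n n). split.
  - intros n. apply (Nat.le_lt_trans _ (Phi (S n) n)); [|apply Hinc].
    destruct (Hnested n (S n) (Nat.le_succ_diag_r n) n) as [n' [Hn' ->]].
    apply strictly_increasing_le; [apply Hinc|exact Hn'].
  - assert (Hlim : forall a, exists y, cv_C (fun n => x (Phi n n) a) y).
    { intros a. destruct (Hcov a) as [j Hj]. destruct (Hconv j a Hj) as [y Hy].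
      exists y. apply (cv_C_subseq (fun n => x (Phi j n) a)); [|exact Hy].
      exists j. intros n Hn. destruct (Hnested j n Hn n) as [n' [Hn' E]].
      exists n'. rewrite E. auto. }
    destruct (functional_choice _ Hlim) as [f Hf]. exists f. exact Hf.
Qed.

(** * Functions on the tree *)

Lemma real_Lub_Rbar_ge0 (E : R -> Prop) :
  (forall x, E x -> 0 <= x) -> 0 <= real (Lub_Rbar E).
Proof.
  intros HE. destruct (Lub_Rbar_correct E) as [Hub Hlub].
  destruct (Lub_Rbar E) as [r| |]; simpl; try lra.
  destruct (Rle_dec 0 r) as [|Hr]; [assumption|].
  assert (Hempty : is_ub_Rbar E m_infty).
  { intros x Hx. specialize (Hub x Hx). specialize (HE x Hx). simpl in Hub. lra. }
  contradiction (Hlub m_infty Hempty).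
Qed.

Lemma real_Lub_Rbar_le (E : R -> Prop) b :
  0 <= b -> (forall x, E x -> x <= b) -> real (Lub_Rbar E) <= b.
Proof.
  intros Hb HE. destruct (Lub_Rbar_correct E) as [_ Hlub].
  specialize (Hlub b HE). destruct (Lub_Rbar E); simpl in *; tauto || lra.
Qed.

Lemma le_real_Lub_Rbar (E : R -> Prop) b x :
  (forall y, E y -> y <= b) -> E x -> x <= real (Lub_Rbar E).
Proof.
  intros HE Hx. destruct (Lub_Rbar_correct E) as [Hub Hlub].
  specialize (Hlub b HE). specialize (Hub x Hx).
  destruct (Lub_Rbar E); simpl in *; tauto.
Qed.

Section Tree.

Variable T : rtree.

Lemma depth_ge1 (v : T) : v <> root T -> (1 <= depth T v)%nat.
Proof.
  intros Hv. destruct (depth T v) eqn:E; [|lia].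
  apply depth_eq0 in E. contradiction.
Qed.

Lemma depth_ind (P : T -> Prop) :
  P (root T) -> (forall v, v <> root T -> P (par T v) -> P v) -> forall v, P v.
Proof.
  intros Hroot Hpar v. remember (depth T v) as d eqn:Hd. revert v Hd.
  induction d as [|d IH]; intros v Hd.
  - symmetry in Hd. apply depth_eq0 in Hd. subst. exact Hroot.
  - assert (Hv : v <> root T) by (intros ->; rewrite depth_root in Hd; discriminate).
    apply Hpar; [exact Hv|]. apply IH.
    pose proof (depth_par T v Hv). lia.
Qed.

Lemma ball_finite N : exists l : list T, forall v, (depth T v <= N)%nat -> List.In v l.
Proof.
  destruct (functional_choice _ (loc_finite T)) as [children Hchildren].
  induction N as [|N [l Hl]].
  - exists (cons (root T) nil). intros v Hv. left.
    symmetry. apply depth_eq0. lia.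
  - exists (List.app l (List.flat_map children l)). intros v Hv. apply List.in_or_app.
    destruct (Nat.le_gt_cases (depth T v) N) as [Hle|Hgt]; [left; auto|right].
    assert (Hv' : v <> root T) by (intros ->; rewrite depth_root in Hgt; lia).
    apply List.in_flat_map. exists (par T v). split.
    + apply Hl. pose proof (depth_par T v Hv'). lia.
    + apply Hchildren; auto.
Qed.

Lemma wD_ge0 m h (v : T) : v <> root T -> 0 <= wD T m h v.
Proof.
  intros Hv. unfold wD, Dif. pose proof (wt_ge1 m _ (depth_ge1 v Hv)).
  pose proof (Cmod_ge_0 (h v - h (par T v))%C). nra.
Qed.

Lemma wD_S m h (v : T) : wD T (S m) h v = ell m (INR (depth T v)) * wD T m h v.
Proof. unfold wD. rewrite wt_S. ring. Qed.

Lemma wD_sub m f g (v : T) : v <> root T ->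
  wD T m (fun w => f w - g w)%C v <= wD T m f v + wD T m g v.
Proof.
  intros Hv. unfold wD, Dif. pose proof (wt_ge1 m _ (depth_ge1 v Hv)).
  replace (f v - g v - (f (par T v) - g (par T v)))%C
    with ((f v - f (par T v)) - (g v - g (par T v)))%C by ring.
  pose proof (Cmod_sub_le (f v - f (par T v)) (g v - g (par T v))). nra.
Qed.

Lemma inL_sub m f g : inL T m f -> inL T m g -> inL T m (fun w => f w - g w)%C.
Proof.
  intros [Bf Hf] [Bg Hg]. exists (Bf + Bg). intros v Hv.
  pose proof (wD_sub m f g v Hv). specialize (Hf v Hv). specialize (Hg v Hv). lra.
Qed.

Lemma inL_nonneg_bound m f : inL T m f ->
  exists B, 0 <= B /\ forall v, v <> root T -> wD T m f v <= B.
Proof.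
  intros [B HB]. exists (Rmax B 0). split; [apply Rmax_r|].
  intros v Hv. eapply Rle_trans; [apply HB; exact Hv|apply Rmax_l].
Qed.

Lemma inL_S_of_tail m f : inL T m f ->
  (forall eps, 0 < eps -> exists N, forall v, v <> root T ->
     (N <= depth T v)%nat -> wD T (S m) f v <= eps) ->
  inL T (S m) f.
Proof.
  intros Hf Htail. destruct (inL_nonneg_bound m f Hf) as [B [HB0 HB]].
  destruct (Htail 1 ltac:(lra)) as [N HN].
  exists (Rmax 1 (ell m (INR N) * B)). intros v Hv.
  destruct (Nat.le_gt_cases N (depth T v)) as [Hd|Hd].
  - eapply Rle_trans; [apply HN; assumption|apply Rmax_l].
  - eapply Rle_trans; [|apply Rmax_r]. rewrite wD_S.
    pose proof (INR_ge1 _ (depth_ge1 v Hv)) as H1.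
    pose proof (ell_le m _ (INR N) H1 (le_INR (depth T v) N ltac:(lia))).
    pose proof (ell_ge1 m _ H1). pose proof (wD_ge0 m f v Hv).
    specialize (HB v Hv). apply Rmult_le_compat; lra.
Qed.

Lemma normL_root m h : Cmod (h (root T)) <= normL T m h.
Proof.
  unfold normL.
  enough (0 <= real (Lub_Rbar (fun x => exists v : T, v <> root T /\ x = wD T m h v))) by lra.
  apply real_Lub_Rbar_ge0. intros x [v [Hv ->]]. apply wD_ge0, Hv.
Qed.

Lemma normL_ge0 m h : 0 <= normL T m h.
Proof. pose proof (normL_root m h). pose proof (Cmod_ge_0 (h (root T))). lra. Qed.

Lemma normL_wD m h v : inL T m h -> v <> root T -> wD T m h v <= normL T m h.
Proof.
  intros [B HB] Hv. unfold normL. pose proof (Cmod_ge_0 (h (root T))).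
  enough (wD T m h v <= real (Lub_Rbar (fun x => exists v : T, v <> root T /\ x = wD T m h v)))
    by lra.
  apply le_real_Lub_Rbar with B; [|eauto].
  intros y [w [Hw ->]]. apply HB, Hw.
Qed.

Lemma normL_le m h a b : 0 <= b -> Cmod (h (root T)) <= a ->
  (forall v, v <> root T -> wD T m h v <= b) -> normL T m h <= a + b.
Proof.
  intros Hb Ha Hwd. unfold normL.
  enough (real (Lub_Rbar (fun x => exists v : T, v <> root T /\ x = wD T m h v)) <= b)
    by lra.
  apply real_Lub_Rbar_le; [exact Hb|]. intros x [v [Hv ->]]. apply Hwd, Hv.
Qed.

Lemma Cmod_le_wsum m h a b :
  Cmod (h (root T)) <= a -> (forall v, v <> root T -> wD T m h v <= b) ->
  forall v, Cmod (h v) <= a + b * wsum m (depth T v).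
Proof.
  intros Ha Hb. apply depth_ind.
  - rewrite depth_root. simpl. lra.
  - intros v Hv IH. pose proof (depth_par T v Hv) as Hd.
    pose proof (wt_ge1 m _ (depth_ge1 v Hv)).
    assert (HDif : Dif T h v <= b / wt m (depth T v)).
    { apply Rle_div_r; [lra|]. rewrite Rmult_comm. apply Hb, Hv. }
    unfold Dif, Rdiv in HDif.
    replace (h v) with (h (par T v) + (h v - h (par T v)))%C by ring.
    pose proof (Cmod_triangle (h (par T v)) (h v - h (par T v))).
    rewrite Hd. simpl wsum. rewrite <- Hd. lra.
Qed.

Lemma Cmod_le_normL m h v : inL T m h ->
  Cmod (h v) <= normL T m h * (1 + wsum m (depth T v)).
Proof.
  intros Hh. pose proof (wsum_ge0 m (depth T v)).
  pose proof (Cmod_le_wsum m h (normL T m h) (normL T m h) (normL_root m h)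
                (fun w Hw => normL_wD m h w Hh Hw) v). lra.
Qed.

Lemma inL0_const m (c : C) : inL0 T m (fun _ => c).
Proof.
  assert (Hzero : forall v, wD T m (fun _ => c) v = 0).
  { intros v. unfold wD, Dif. replace (c - c)%C with (RtoC 0) by ring.
    rewrite Cmod_0. ring. }
  split; [exists 0; intros v _; rewrite Hzero; lra|].
  intros eps Heps. exists O. intros v _ _. rewrite Hzero. lra.
Qed.

(** * Multiplication operators *)

Lemma Dif_Mult_le psi h (v : T) : Dif T (Mult T psi h) v <=
  Cmod (psi v) * Dif T h v + Cmod (h (par T v)) * Dif T psi v.
Proof.
  unfold Dif, Mult.
  replace (psi v * h v - psi (par T v) * h (par T v))%C
    with (psi v * (h v - h (par T v)) + h (par T v) * (psi v - psi (par T v)))%C by ring.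
  eapply Rle_trans; [apply Cmod_triangle|]. rewrite !Cmod_mult. lra.
Qed.

(* The extra factor [ell_k(|v|)] in the weight of [L^(k+1)] absorbs the growth
   [|h(v^-)| <= (a + b) ell_k(|v|)] of [h] in [L^(k)]. *)
Lemma wD_Mult_le i psi h a b (v : T) : 0 <= a -> 0 <= b ->
  Cmod (h (root T)) <= a -> (forall w, w <> root T -> wD T (S i) h w <= b) ->
  v <> root T ->
  wD T (S i) (Mult T psi h) v <= b * Cmod (psi v) + (a + b) * wD T (S (S i)) psi v.
Proof.
  intros Ha Hb Hroot Hwd Hv.
  set (l := ell (S i) (INR (depth T v))).
  assert (Hl : 1 <= l) by apply (ell_ge1 _ _ (INR_ge1 _ (depth_ge1 v Hv))).
  assert (Hpar : Cmod (h (par T v)) <= (a + b) * l).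
  { pose proof (Cmod_le_wsum (S i) h a b Hroot Hwd (par T v)).
    pose proof (wsum_le_ell i (depth T (par T v))) as Hs.
    rewrite <- (depth_par T v Hv) in Hs. fold l in Hs. nra. }
  rewrite (wD_S (S i) psi v). fold l. specialize (Hwd v Hv). unfold wD in *.
  set (w := wt (S i) (depth T v)) in *.
  assert (Hw : 1 <= w) by apply (wt_ge1 _ _ (depth_ge1 v Hv)).
  pose proof (Dif_Mult_le psi h v) as HD.
  assert (0 <= Dif T psi v) by apply Cmod_ge_0.
  pose proof (Cmod_ge_0 (psi v)).
  assert (Cmod (psi v) * (w * Dif T h v) <= b * Cmod (psi v)) by nra.
  assert (Cmod (h (par T v)) * (w * Dif T psi v) <= (a + b) * (l * (w * Dif T psi v))).
  { replace ((a + b) * (l * (w * Dif T psi v))) with ((a + b) * l * (w * Dif T psi v)) by ring.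
    apply Rmult_le_compat_r; [nra|exact Hpar]. }
  pose proof (Rmult_le_compat_l w _ _ ltac:(lra) HD). lra.
Qed.

Lemma wD_Mult_tail i psi a b : inLzero T psi -> inL0 T (S (S i)) psi ->
  0 <= a -> 0 <= b -> forall eps, 0 < eps -> exists N, forall h,
  Cmod (h (root T)) <= a -> (forall w, w <> root T -> wD T (S i) h w <= b) ->
  forall v, v <> root T -> (N <= depth T v)%nat -> wD T (S i) (Mult T psi h) v <= eps.
Proof.
  intros Hz [_ Hp] Ha Hb eps Heps.
  destruct (Hz (eps / 2 / (b + 1))) as [N1 HN1]; [apply Rdiv_lt_0_compat; lra|].
  destruct (Hp (eps / 2 / (a + b + 1))) as [N2 HN2]; [apply Rdiv_lt_0_compat; lra|].
  exists (Nat.max N1 N2). intros h Hroot Hwd v Hv Hd.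
  eapply Rle_trans; [apply (wD_Mult_le i psi h a b v); assumption|].
  specialize (HN1 v ltac:(lia)). specialize (HN2 v Hv ltac:(lia)).
  pose proof (Cmod_ge_0 (psi v)). pose proof (wD_ge0 (S (S i)) psi v Hv).
  assert (b * Cmod (psi v) <= eps / 2).
  { apply Rle_trans with ((b + 1) * (eps / 2 / (b + 1))); [nra|right; field; lra]. }
  assert ((a + b) * wD T (S (S i)) psi v <= eps / 2).
  { apply Rle_trans with ((a + b + 1) * (eps / 2 / (a + b + 1))); [nra|right; field; lra]. }
  lra.
Qed.

Lemma inLzero_bounded m psi : inLzero T psi -> inL T m psi ->
  exists M, forall v, Cmod (psi v) <= M.
Proof.
  intros Hz Hl. destruct (Hz 1 ltac:(lra)) as [N HN].
  destruct (inL_nonneg_bound m psi Hl) as [B [HB0 HB]].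
  exists (Rmax 1 (Cmod (psi (root T)) + B * wsum m N)). intros v.
  destruct (Nat.le_gt_cases N (depth T v)) as [Hd|Hd].
  - eapply Rle_trans; [apply HN, Hd|apply Rmax_l].
  - eapply Rle_trans; [apply (Cmod_le_wsum m psi _ B (Rle_refl _) HB)|].
    eapply Rle_trans; [|apply Rmax_r].
    pose proof (wsum_le m (depth T v) N ltac:(lia)). nra.
Qed.

Lemma Mult_inL0 i psi f : inLzero T psi -> inL0 T (S (S i)) psi ->
  inL T (S i) f -> inL0 T (S i) (Mult T psi f).
Proof.
  intros Hz Hp Hf.
  destruct (inL_nonneg_bound _ f Hf) as [b [Hb0 Hb]].
  pose proof (Cmod_ge_0 (f (root T))) as Ha0.
  split.
  - destruct (inLzero_bounded _ psi Hz (proj1 Hp)) as [M HM].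
    destruct (inL_nonneg_bound _ psi (proj1 Hp)) as [Bp [HBp0 HBp]].
    exists (b * M + (Cmod (f (root T)) + b) * Bp). intros v Hv.
    eapply Rle_trans; [apply (wD_Mult_le i psi f _ b v Ha0 Hb0 (Rle_refl _) Hb Hv)|].
    specialize (HM v). specialize (HBp v Hv).
    apply Rplus_le_compat; apply Rmult_le_compat_l; lra.
  - intros eps Heps.
    destruct (wD_Mult_tail i psi _ b Hz Hp Ha0 Hb0 eps Heps) as [N HN].
    exists N. intros v Hv Hd. apply HN; auto. lra.
Qed.

Lemma pointwise_limit_bounded m (f : nat -> T -> C) g B :
  (forall n, inL T m (f n)) -> (forall n, normL T m (f n) <= B) ->
  (forall v, cv_C (fun n => f n v) (g v)) ->
  Cmod (g (root T)) <= B /\ forall v, v <> root T -> wD T m g v <= B.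
Proof.
  intros Hf HB Hcv. split.
  - apply (cv_C_Cmod_le _ _ B (Hcv (root T))). intros n.
    eapply Rle_trans; [apply normL_root|apply HB].
  - intros v Hv. unfold wD, Dif.
    assert (Hw : 0 < wt m (depth T v)) by (pose proof (wt_ge1 m _ (depth_ge1 v Hv)); lra).
    rewrite Rmult_comm. apply (Rle_div_r _ _ _ Hw).
    apply (cv_C_Cmod_le _ _ _ (cv_C_sub _ _ _ _ (Hcv v) (Hcv (par T v)))). intros n.
    apply (Rle_div_r _ _ _ Hw). rewrite Rmult_comm.
    eapply Rle_trans; [apply (normL_wD m (f n) v (Hf n) Hv)|apply HB].
Qed.

(* On the finite ball of depth [N] the convergence is uniform; beyond it
   [wD_Mult_tail] applies uniformly in [n]. *)
Lemma Mult_normL_cv0 i psi (h : nat -> T -> C) a b :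
  inLzero T psi -> inL0 T (S (S i)) psi -> 0 <= a -> 0 <= b ->
  (forall n, Cmod (h n (root T)) <= a) ->
  (forall n w, w <> root T -> wD T (S i) (h n) w <= b) ->
  (forall v, cv_C (fun n => h n v) 0) ->
  is_lim_seq (fun n => normL T (S i) (Mult T psi (h n))) 0.
Proof.
  intros Hz Hp Ha Hb Hroot Hwd Hcv. apply is_lim_seq_spec. intros eps.
  set (e := eps / 4). assert (He : 0 < e) by (unfold e; pose proof (cond_pos eps); lra).
  destruct (wD_Mult_tail i psi a b Hz Hp Ha Hb e He) as [N HN].
  destruct (ball_finite N) as [l Hl].
  set (W := wt (S i) (S N)). assert (HW : 1 <= W) by (apply wt_ge1; lia).
  set (eta := e / (2 * W)).
  assert (Heta : 0 < eta) by (apply Rdiv_lt_0_compat; lra).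
  assert (Hball : eventually (fun n => forall v, List.In v l -> Cmod (Mult T psi (h n) v) <= eta)).
  { apply eventually_forall_In. intros v _.
    pose proof (cv_C_scal _ _ (psi v) (Hcv v) eta Heta) as Hv.
    eapply filter_imp; [|exact Hv]. intros n Hn.
    rewrite Cmult_0_r, Cminus_0_r in Hn. exact Hn. }
  eapply filter_imp; [|exact Hball]. intros n Hn. simpl.
  rewrite Rminus_0_r, Rabs_right by (apply Rle_ge, normL_ge0).
  apply Rle_lt_trans with (eta + e).
  2: { assert (eta <= e) by (apply Rmult_le_reg_l with (2 * W); unfold eta; field_simplify; nra).
       unfold e in *. pose proof (cond_pos eps). lra. }
  apply normL_le; [lra|apply Hn, Hl; rewrite depth_root; lia|].
  intros v Hv. destruct (Nat.le_gt_cases N (depth T v)) as [Hd|Hd].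
  - apply HN; auto.
  - pose proof (depth_par T v Hv) as Hdp.
    pose proof (Hn v (Hl v ltac:(lia))) as Hv1.
    pose proof (Hn (par T v) (Hl (par T v) ltac:(lia))) as Hv2.
    pose proof (wt_le (S i) (depth T v) (S N) (depth_ge1 v Hv) ltac:(lia)) as HwW.
    fold W in HwW.
    pose proof (Cmod_sub_le (Mult T psi (h n) v) (Mult T psi (h n) (par T v))).
    pose proof (Cmod_ge_0 (Mult T psi (h n) v - Mult T psi (h n) (par T v))%C).
    pose proof (wt_ge1 (S i) _ (depth_ge1 v Hv)).
    unfold wD, Dif.
    apply Rle_trans with (W * (2 * eta)); [apply Rmult_le_compat; lra|].
    unfold eta. right. field. lra.
Qed.

Lemma Mult_compact i psi (X : (T -> C) -> Prop) :
  inLzero T psi -> inL0 T (S (S i)) psi ->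
  (forall f, X f -> inL T (S i) f) -> (forall f, inL0 T (S i) f -> X f) ->
  compact_on T (S i) X (Mult T psi).
Proof.
  intros Hz Hp HXL HX0.
  split; [intros f Hf; apply HX0, Mult_inL0, HXL; assumption|].
  intros fs HXf [B HB].
  assert (HfL : forall n, inL T (S i) (fs n)) by (intros n; apply HXL, HXf).
  assert (HB0 : 0 <= B) by (eapply Rle_trans; [apply normL_ge0|apply (HB O)]).
  assert (Hbd : forall v, exists M, forall n, Cmod (fs n v) <= M).
  { intros v. exists (B * (1 + wsum (S i) (depth T v))). intros n.
    eapply Rle_trans; [apply Cmod_le_normL, HfL|].
    pose proof (wsum_ge0 (S i) (depth T v)). apply Rmult_le_compat_r; [lra|apply HB]. }
  destruct (functional_choice _ ball_finite) as [ball Hball].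
  destruct (pointwise_cv_subseq ball fs (fun v => ex_intro _ (depth T v) (Hball _ v (le_n _))) Hbd)
    as [phi [Hphi [f Hf]]].
  destruct (pointwise_limit_bounded (S i) (fun n => fs (phi n)) f B
              (fun n => HfL _) (fun n => HB _) Hf) as [Hfroot Hfwd].
  exists phi, (Mult T psi f). split; [exact Hphi|]. split.
  { apply HX0, Mult_inL0; auto. exists B. exact Hfwd. }
  set (h := fun n v => (fs (phi n) v - f v)%C).
  assert (Eh : forall n, (fun v => Mult T psi (fs (phi n)) v - Mult T psi f v)%C = Mult T psi (h n)).
  { intros n. apply functional_extensionality. intros v. unfold Mult, h. ring. }
  apply (is_lim_seq_ext (fun n => normL T (S i) (Mult T psi (h n)))).
  { intros n. rewrite Eh. reflexivity. }
  apply (Mult_normL_cv0 i psi h (2 * B) (2 * B)); auto; try lra.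
  - intros n. unfold h. eapply Rle_trans; [apply Cmod_sub_le|].
    pose proof (normL_root (S i) (fs (phi n))). specialize (HB (phi n)). lra.
  - intros n w Hw. unfold h. eapply Rle_trans; [apply wD_sub, Hw|].
    pose proof (normL_wD (S i) (fs (phi n)) w (HfL _) Hw). specialize (HB (phi n)).
    specialize (Hfwd w Hw). lra.
  - intros v eps Heps. eapply filter_imp; [|exact (Hf v eps Heps)].
    intros n Hn. unfold h. rewrite Cminus_0_r. exact Hn.
Qed.

(** * Test functions *)

(* The test function [f_N], with [S = wsum k]. *)
Definition test_fn (k N : nat) (v : T) : C :=
  RtoC (wsum k (Nat.min (depth T v) N) ^ 2 / wsum k N).

Lemma test_fn_root k N : test_fn k N (root T) = 0%C.
Proof. unfold test_fn. rewrite depth_root. simpl. f_equal. unfold Rdiv. ring. Qed.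

Lemma test_fn_deep k N v : (1 <= N)%nat -> (N <= depth T v)%nat ->
  test_fn k N v = RtoC (wsum k N).
Proof.
  intros HN Hd. unfold test_fn. rewrite Nat.min_r by exact Hd. f_equal.
  pose proof (wsum_gt0 k N HN). field. lra.
Qed.

Lemma wD_test_fn k N v : (1 <= N)%nat -> v <> root T -> wD T k (test_fn k N) v <= 2.
Proof.
  intros HN Hv. pose proof (depth_par T v Hv) as Hd.
  pose proof (wsum_gt0 k N HN) as HSN.
  unfold wD, Dif, test_fn. rewrite <- RtoC_minus, Cmod_R.
  destruct (Nat.le_gt_cases (depth T v) N) as [Hle|Hlt].
  - rewrite !Nat.min_l by lia. rewrite Hd. simpl wsum. rewrite <- Hd.
    pose proof (wsum_le k (depth T v) N Hle) as Hs. rewrite Hd in Hs. simpl wsum in Hs.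
    rewrite <- Hd in Hs.
    pose proof (wsum_ge0 k (depth T (par T v))).
    pose proof (wt_ge1 k (depth T v) (depth_ge1 v Hv)).
    set (s := wsum k (depth T (par T v))) in *. set (w := wt k (depth T v)) in *.
    set (SN := wsum k N) in *.
    assert (Hinv : 0 < / w) by (apply Rinv_0_lt_compat; lra).
    assert (HinvS : 0 < / SN) by (apply Rinv_0_lt_compat; lra).
    replace ((s + / w) ^ 2 / SN - s ^ 2 / SN) with ((2 * s + / w) / w / SN) by (field; lra).
    rewrite Rabs_right by (apply Rle_ge; unfold Rdiv; repeat apply Rmult_le_pos; lra).
    replace (w * ((2 * s + / w) / w / SN)) with ((s + (s + / w)) / SN) by (field; lra).
    apply Rmult_le_reg_l with SN; [lra|].
    replace (SN * ((s + (s + / w)) / SN)) with (s + (s + / w)) by (field; lra). lra.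
  - rewrite !Nat.min_r by lia. rewrite Rminus_diag, Rabs_R0, Rmult_0_r. lra.
Qed.

Lemma wD_test_fn_deep k N v : v <> root T -> (N < depth T v)%nat ->
  wD T k (test_fn k N) v = 0.
Proof.
  intros Hv Hd. pose proof (depth_par T v Hv).
  unfold wD, Dif, test_fn. rewrite !Nat.min_r by lia.
  replace (_ - _)%C with (RtoC 0) by ring. rewrite Cmod_0. ring.
Qed.

Lemma test_fn_inL0 k N : (1 <= N)%nat -> inL0 T k (test_fn k N).
Proof.
  intros HN. split.
  - exists 2. intros v Hv. apply wD_test_fn; assumption.
  - intros eps Heps. exists (S N). intros v Hv Hd.
    rewrite wD_test_fn_deep by (auto; lia). lra.
Qed.

Lemma normL_test_fn k N : (1 <= N)%nat -> normL T k (test_fn k N) <= 2.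
Proof.
  intros HN. replace 2 with (0 + 2) by ring. apply normL_le; [lra| |].
  - rewrite test_fn_root, Cmod_0. lra.
  - intros v Hv. apply wD_test_fn; assumption.
Qed.

Lemma Cmod_test_fn_le k N v : (1 <= N)%nat ->
  Cmod (test_fn k N v) <= wsum k (depth T v) ^ 2 / wsum k N.
Proof.
  intros HN. pose proof (wsum_gt0 k N HN).
  pose proof (wsum_ge0 k (Nat.min (depth T v) N)).
  pose proof (wsum_le k _ (depth T v) (Nat.le_min_l (depth T v) N)).
  unfold test_fn. rewrite Cmod_R, Rabs_right by (apply Rle_ge, Rdiv_le_0_compat; nra).
  unfold Rdiv. apply Rmult_le_compat_r; [apply Rlt_le, Rinv_0_lt_compat; lra|nra].
Qed.

Lemma test_fn_cv0 i (Ns : nat -> nat) : (forall n, (S n <= Ns n)%nat) ->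
  forall v, cv_C (fun n => test_fn (S i) (Ns n) v) 0.
Proof.
  intros HNs v eps Heps. set (s := wsum (S i) (depth T v)).
  pose proof (proj2 (is_lim_seq_spec _ _) (wsum_unbounded i) (s ^ 2 / eps)) as Hev.
  eapply filter_imp; [|exact Hev]. intros n Hn. simpl in Hn.
  specialize (HNs n). pose proof (wsum_le (S i) n (Ns n) ltac:(lia)).
  pose proof (wsum_gt0 (S i) (Ns n) ltac:(lia)) as Hpos.
  rewrite Cminus_0_r. eapply Rle_trans; [apply Cmod_test_fn_le; lia|]. fold s.
  apply (Rle_div_l _ _ _ Hpos). rewrite Rmult_comm.
  apply (Rle_div_l _ _ _ Heps). lra.
Qed.

Lemma normL_cv0_pointwise m (h : nat -> T -> C) : (forall n, inL T m (h n)) ->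
  is_lim_seq (fun n => normL T m (h n)) 0 -> forall v, cv_C (fun n => h n v) 0.
Proof.
  intros Hh Hlim v eps Heps. apply is_lim_seq_spec in Hlim.
  set (c := 1 + wsum m (depth T v)).
  assert (Hc : 1 <= c) by (pose proof (wsum_ge0 m (depth T v)); unfold c; lra).
  assert (Hec : 0 < eps / c) by (apply Rdiv_lt_0_compat; lra).
  eapply filter_imp; [|exact (Hlim (mkposreal _ Hec))]. intros n Hn. simpl in Hn.
  rewrite Rminus_0_r, Rabs_right in Hn by (apply Rle_ge, normL_ge0).
  rewrite Cminus_0_r. eapply Rle_trans; [apply Cmod_le_normL, Hh|]. fold c.
  apply Rlt_le, Rlt_div_r; [lra|exact Hn].
Qed.

Lemma wD_Mult_test_fn_deep k N psi v : (1 <= N)%nat -> v <> root T ->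
  (N <= depth T (par T v))%nat ->
  wD T k (Mult T psi (test_fn k N)) v = wsum k N * wD T k psi v.
Proof.
  intros HN Hv Hd. pose proof (depth_par T v Hv).
  unfold wD, Dif, Mult. rewrite !test_fn_deep by (auto; lia).
  replace (psi v * wsum k N - psi (par T v) * wsum k N)%C
    with ((psi v - psi (par T v)) * RtoC (wsum k N))%C by ring.
  rewrite Cmod_mult, Cmod_R, Rabs_right by (apply Rle_ge, Rlt_le, wsum_gt0, HN). ring.
Qed.

Section Compact.

Variables (i : nat) (psi : T -> C) (X : (T -> C) -> Prop).
Hypothesis Hcompact : compact_on T (S i) X (Mult T psi).
Hypothesis HX_test_fn : forall N, (1 <= N)%nat -> X (test_fn (S i) N).
Hypothesis HX_inL : forall g, X g -> inL T (S i) g.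

(* The images of the test functions have a norm-convergent subsequence, whose limit
   must vanish since the test functions tend to 0 pointwise. *)
Lemma compact_Mult_test_fn_small (Ns : nat -> nat) : (forall n, (S n <= Ns n)%nat) ->
  forall delta, 0 < delta -> exists n, forall v, v <> root T ->
    wD T (S i) (Mult T psi (test_fn (S i) (Ns n))) v < delta.
Proof.
  intros HNs delta Hdelta. destruct Hcompact as [Hmap Hcomp].
  destruct (Hcomp (fun n => test_fn (S i) (Ns n))) as [phi [g [Hphi [Hg Hlim]]]].
  { intros n. apply HX_test_fn. specialize (HNs n). lia. }
  { exists 2. intros n. apply normL_test_fn. specialize (HNs n). lia. }
  set (u n := Mult T psi (test_fn (S i) (Ns (phi n)))).
  assert (HuX : forall n, X (u n)).
  { intros n. apply Hmap, HX_test_fn. specialize (HNs (phi n)). lia. }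
  assert (Hg0 : forall v, g v = 0%C).
  { intros v. apply (cv_C_unique (fun n => u n v)).
    - intros eps Heps.
      eapply filter_imp; [|apply (normL_cv0_pointwise (S i) (fun n w => u n w - g w)%C); eauto].
      + intros n Hn. simpl in Hn. rewrite Cminus_0_r in Hn. exact Hn.
      + intros n. apply inL_sub; apply HX_inL; auto.
    - assert (HNs' : forall n, (S n <= Ns (phi n))%nat).
      { intros n. pose proof (strictly_increasing_ge _ Hphi n). specialize (HNs (phi n)). lia. }
      pose proof (cv_C_scal _ _ (psi v) (test_fn_cv0 i _ HNs' v)) as Hcv.
      rewrite Cmult_0_r in Hcv. exact Hcv. }
  apply is_lim_seq_spec in Hlim. destruct (Hlim (mkposreal delta Hdelta)) as [N HN].
  exists (phi N). intros v Hv. specialize (HN N (le_n N)). simpl in HN.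
  assert (Eu : (fun w => Mult T psi (test_fn (S i) (Ns (phi N))) w - g w)%C = u N).
  { apply functional_extensionality. intros w. rewrite Hg0, Cminus_0_r. reflexivity. }
  rewrite Eu, Rminus_0_r, Rabs_right in HN by (apply Rle_ge, normL_ge0).
  eapply Rle_lt_trans; [apply normL_wD; [apply HX_inL, HuX|exact Hv]|exact HN].
Qed.

Lemma compact_inLzero : inLzero T psi.
Proof.
  intros eps Heps. apply NNPP. intros Hno.
  assert (Hbad : forall N, exists v, (N <= depth T v)%nat /\ eps < Cmod (psi v)).
  { intros N. apply NNPP. intros Hn. apply Hno. exists N. intros v Hv.
    apply Rnot_lt_le. intros Hlt. apply Hn. exists v. split; assumption. }
  destruct (functional_choice _ (fun n => Hbad (S n))) as [vs Hvs].
  destruct (compact_Mult_test_fn_small (fun n => depth T (vs n)) (fun n => proj1 (Hvs n))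
              eps Heps) as [n Hn].
  destruct (Hvs n) as [Hd Hlt]. set (N := depth T (vs n)) in *.
  assert (HN : (1 <= N)%nat) by lia.
  (* [M_psi f_N] vanishes at the root and equals [psi (vs n) S(N)] at [vs n], but its
     difference quotients are below [eps], so it grows by at most [eps S(N)]. *)
  pose proof (Cmod_le_wsum (S i) (Mult T psi (test_fn (S i) N)) 0 eps) as Hpt.
  unfold Mult at 1 in Hpt. rewrite test_fn_root, Cmult_0_r, Cmod_0 in Hpt.
  specialize (Hpt (Rle_refl 0) (fun v Hv => Rlt_le _ _ (Hn v Hv)) (vs n)).
  unfold Mult in Hpt. fold N in Hpt. rewrite test_fn_deep, Cmod_mult, Cmod_R in Hpt by lia.
  pose proof (wsum_gt0 (S i) N HN). rewrite Rabs_right in Hpt by lra. nra.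
Qed.

Lemma compact_inL0_S : X (fun _ => RtoC 1) -> inL0 T (S (S i)) psi.
Proof.
  intros HX1.
  assert (HpsiL : inL T (S i) psi).
  { replace psi with (Mult T psi (fun _ => RtoC 1)).
    - apply HX_inL, (proj1 Hcompact), HX1.
    - apply functional_extensionality. intros v. unfold Mult. ring. }
  assert (Htail : forall eps, 0 < eps -> exists N, forall v, v <> root T ->
            (N <= depth T v)%nat -> wD T (S (S i)) psi v <= eps).
  { intros eps Heps. apply NNPP. intros Hno.
    assert (Hbad : forall N, exists v,
               v <> root T /\ (N <= depth T v)%nat /\ eps < wD T (S (S i)) psi v).
    { intros N. apply NNPP. intros Hn. apply Hno. exists N. intros v Hv Hd.
      apply Rnot_lt_le. intros Hlt. apply Hn. exists v. auto. }
    destruct (wsum_ge_ell i) as [c [Hc [N0 HN0]]].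
    destruct (functional_choice _ (fun n => Hbad (S (S n) + N0)%nat)) as [vs Hvs].
    set (Ns n := depth T (par T (vs n))).
    assert (HNs : forall n, (S n <= Ns n)%nat /\ (N0 <= Ns n)%nat).
    { intros n. destruct (Hvs n) as [Hv [Hd _]]. pose proof (depth_par T _ Hv).
      unfold Ns. lia. }
    destruct (compact_Mult_test_fn_small Ns (fun n => proj1 (HNs n)) (c * eps))
      as [n Hn]; [nra|].
    (* Beyond depth [N] the difference quotients of [M_psi f_N] are [S(N)] times those
       of [psi], and [S(N) >= c ell_k(N + 1)]. *)
    destruct (Hvs n) as [Hv [_ Hlt]]. specialize (Hn (vs n) Hv).
    destruct (HNs n) as [HNs1 HNs2].
    rewrite wD_Mult_test_fn_deep in Hn by (auto; lia).
    specialize (HN0 (Ns n) HNs2).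
    rewrite wD_S, (depth_par T _ Hv) in Hlt. fold (Ns n) in Hlt.
    pose proof (wD_ge0 (S i) psi (vs n) Hv). nra. }
  split; [apply inL_S_of_tail|]; assumption.
Qed.

End Compact.

Lemma compact_Mult_iff i psi (X : (T -> C) -> Prop) :
  (forall g, inL0 T (S i) g -> X g) -> (forall g, X g -> inL T (S i) g) ->
  compact_on T (S i) X (Mult T psi) <-> inLzero T psi /\ inL0 T (S (S i)) psi.
Proof.
  intros HX0 HXL. split.
  - intros Hc.
    assert (Htest : forall N, (1 <= N)%nat -> X (test_fn (S i) N))
      by (intros N HN; apply HX0, test_fn_inL0, HN).
    split; [apply (compact_inLzero i psi X)|apply (compact_inL0_S i psi X)]; auto.
    apply HX0, inL0_const.
  - intros [Hz Hp]. apply Mult_compact; assumption.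
Qed.

End Tree.

Theorem theorem6p2 (T : rtree) (k : nat) (psi : T -> C) :
  (1 <= k)%nat ->
  bounded_on T k (inL T k) (Mult T psi) ->
  (compact_on T k (inL T k) (Mult T psi) <->
   compact_on T k (inL0 T k) (Mult T psi)) /\
  (compact_on T k (inL0 T k) (Mult T psi) <->
   (inLzero T psi /\ inL0 T (S k) psi)).
Proof.
  intros Hk _. destruct k as [|i]; [lia|].
  rewrite (compact_Mult_iff T i psi (inL T (S i))) by (intros g Hg; apply Hg).
  rewrite (compact_Mult_iff T i psi (inL0 T (S i))) by (intros g Hg; apply Hg).
  tauto.
Qed.
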